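(* Let $e_1, e_2$ be SLamJS expressions (possibly containing markers and holes) and $n \ge 0$ with $e_1 \dashrightarrow_n e_2$, and let $M \subseteq \mathrm{Marker}$. Then either $\lfloor e_1 \rfloor_M \dashrightarrow_n \lfloor e_2 \rfloor_M$, or the reduction rule applied to derive $e_1 \dashrightarrow_n e_2$ is one of the lift rules (Lift-App, Lift-If, Lift-Unbox, Lift-RunIn, Lift-ReadSel, Lift-ReadRec, Lift-WriteSel, Lift-WriteRec, Lift-DelSel, Lift-DelRec) lifting a marker $\mathfrak m \notin M$.
   Context: **Syntax.** Constants: $k ::= \mathsf{undef}\mid\mathsf{null}\mid\mathsf{true}\mid\mathsf{false}\mid s\mid n$ ($s$ a string, $n$ a number). $x$ ranges over a set $\mathrm{Name}$ of variables and $\mathfrak m$ over a set $\mathrm{Marker}$ of markers. Expressions: $e ::= k \mid \{s_1:e_1,\dots,s_j:e_j\} \mid x \mid \mathsf{fun}(x)\{e\} \mid e(e) \mid \mathsf{box}\,e \mid \mathsf{unbox}\,e \mid \mathsf{run}\,e \mid \mathsf{if}(e)\{e\}\mathsf{else}\{e\} \mid e[e] \mid e[e]=e \mid \mathsf{del}\,e[e] \mid (e,\rho) \mid \mathsf{run}\,e\,\mathsf{in}\,\rho \mid (\mathfrak m : e) \mid \_$, where records have distinct field names, $\_$ is a hole, and environments $\rho$ are finite partial maps from $\mathrm{Name}$ to stage-0 values. Stage-indexed values: $v^0$ includes closures $(\mathsf{fun}(x)\{e\},\rho)$; for every $n\ge0$, $v^n$ includes constants $k$, records $\{s_1:v^n_1,\dots,s_j:v^n_j\}$,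 $\mathsf{box}\,v^{n+1}$, $(\mathfrak m:v^n)$ and $\_$; $v^{n+1}$ also includes $x$, $\mathsf{fun}(x)\{v^{n+1}\}$, $v^{n+1}(v^{n+1})$, $\mathsf{run}\,v^{n+1}$, $\mathsf{if}(v^{n+1})\{v^{n+1}\}\mathsf{else}\{v^{n+1}\}$, $v^{n+1}[v^{n+1}]$, $v^{n+1}[v^{n+1}]=v^{n+1}$, $\mathsf{del}\,v^{n+1}[v^{n+1}]$; $v^{n+2}$ also includes $\mathsf{unbox}\,v^{n+1}$. A value $v$ without superscript is a stage-0 value. Write $\pi$ for the field name string ''__proto__''. **Top-level reduction** $\dashrightarrow_n$ ($n\ge0$) is the least relation closed under the following rules (rules written with $\dashrightarrow_n$ hold for all $n$). Environment propagation: $(k,\rho)\dashrightarrow_n k$; $(\{\overline{s:e}\},\rho)\dashrightarrow_n\{\overline{s:(e,\rho)}\}$; $(x,\rho)\dashrightarrow_{n+1}x$; $(\mathsf{fun}(x)\{e\},\rho)\dashrightarrow_{n+1}\mathsf{fun}(x)\{(e,\rho)\}$; $(e_1(e_2),\rho)\dashrightarrow_n (e_1,\rho)((e_2,\rho))$; $(\mathsf{box}\,e,\rho)\dashrightarrow_n\mathsf{box}\,(e,\rho)$; $(\mathsf{unbox}\,e,\rho)\dashrightarrow_n\mathsf{unbox}\,(e,\rho)$; $(\mathsf{run}\,e,\rho)\dashrightarrow_0 \mathsf{run}\,(e,\rho)\,\mathsf{in}\,\rho$; $(\mathsf{run}\,e,\rho)\dashrightarrow_{n+1}\mathsf{run}\,(e,\rho)$;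 $(\mathsf{if}(e_1)\{e_2\}\mathsf{else}\{e_3\},\rho)\dashrightarrow_n\mathsf{if}((e_1,\rho))\{(e_2,\rho)\}\mathsf{else}\{(e_3,\rho)\}$; $(e_1[e_2],\rho)\dashrightarrow_n(e_1,\rho)[(e_2,\rho)]$; $(e_1[e_2]=e_3,\rho)\dashrightarrow_n(e_1,\rho)[(e_2,\rho)]=(e_3,\rho)$; $(\mathsf{del}\,e_1[e_2],\rho)\dashrightarrow_n\mathsf{del}\,(e_1,\rho)[(e_2,\rho)]$; $((\mathfrak m:e),\rho)\dashrightarrow_n(\mathfrak m:(e,\rho))$; $(\_,\rho)\dashrightarrow_n\_$. Proper rules: (Lookup) $(x,\rho)\dashrightarrow_0\rho(x)$; (Apply) $(\mathsf{fun}(x)\{e\},\rho)(v)\dashrightarrow_0(e,\rho[x\mapsto v])$; (Unbox) $\mathsf{unbox}\,(\mathsf{box}\,v^1)\dashrightarrow_1 v^1$; (Run) $\mathsf{run}\,(\mathsf{box}\,v^1)\,\mathsf{in}\,\rho\dashrightarrow_0(v^1,\rho)$; (IfTrue) $\mathsf{if}(\mathsf{true})\{e_1\}\mathsf{else}\{e_2\}\dashrightarrow_0 e_1$; (IfFalse) $\mathsf{if}(\mathsf{false})\{e_1\}\mathsf{else}\{e_2\}\dashrightarrow_0 e_2$; (Read1) $\{\overline{s:v},s_i:v_i,\overline{s:v}'\}[s_i]\dashrightarrow_0 v_i$; (Read2) $\{\overline{s:v},\pi:\{\overline{s:v}'\},\overline{s:v}''\}[s_x]\dashrightarrow_0\{\overline{s:v}'\}[s_x]$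 if $s_x\notin\overline s\cup\overline s''$; (Read3) $\{\overline{s:v},\pi:\mathsf{null},\overline{s:v}''\}[s_x]\dashrightarrow_0\mathsf{undef}$ if $s_x\notin\overline s\cup\overline s''$; (Write1) $\{\overline{s:v},s_i:v_i,\overline{s:v}'\}[s_i]=v_i'\dashrightarrow_0\{\overline{s:v},s_i:v_i',\overline{s:v}'\}$; (Write2) $\{\overline{s:v}\}[s_x]=v_x\dashrightarrow_0\{\overline{s:v},s_x:v_x\}$ if $s_x\notin\overline s$; (Del1) $\mathsf{del}\,\{\overline{s:v},s_i:v_i,\overline{s:v}'\}[s_i]\dashrightarrow_0\{\overline{s:v},\overline{s:v}'\}$; (Del2) $\mathsf{del}\,\{\overline{s:v}\}[s_x]\dashrightarrow_0\{\overline{s:v}\}$ if $s_x\notin\overline s$. Lift rules: (Lift-App) $((\mathfrak m:e),\rho)(v)\dashrightarrow_0(\mathfrak m:((e,\rho)(v)))$; (Lift-If) $\mathsf{if}((\mathfrak m:v))\{e_1\}\mathsf{else}\{e_2\}\dashrightarrow_0(\mathfrak m:\mathsf{if}(v)\{e_1\}\mathsf{else}\{e_2\})$; (Lift-Unbox) $\mathsf{unbox}\,(\mathfrak m:v)\dashrightarrow_1(\mathfrak m:\mathsf{unbox}\,v)$; (Lift-RunIn) $\mathsf{run}\,(\mathfrak m:v)\,\mathsf{in}\,\rho\dashrightarrow_0(\mathfrak m:\mathsf{run}\,v\,\mathsf{in}\,\rho)$; (Lift-ReadSel) $v_1[(\mathfrak m:v_2)]\dashrightarrow_0(\mathfrak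 m:v_1[v_2])$; (Lift-ReadRec) $(\mathfrak m:v_1)[v_2]\dashrightarrow_0(\mathfrak m:v_1[v_2])$; (Lift-WriteSel) $v_1[(\mathfrak m:v_2)]=v_3\dashrightarrow_0(\mathfrak m:v_1[v_2]=v_3)$; (Lift-WriteRec) $(\mathfrak m:v_1)[v_2]=v_3\dashrightarrow_0(\mathfrak m:v_1[v_2]=v_3)$; (Lift-DelSel) $\mathsf{del}\,v_1[(\mathfrak m:v_2)]\dashrightarrow_0(\mathfrak m:\mathsf{del}\,v_1[v_2])$; (Lift-DelRec) $\mathsf{del}\,(\mathfrak m:v_1)[v_2]\dashrightarrow_0(\mathfrak m:\mathsf{del}\,v_1[v_2])$. **Erasure.** For $M\subseteq\mathrm{Marker}$, $\lfloor e\rfloor_M$ is defined homomorphically on all constructs (including inside environments, $\lfloor\rho\rfloor_M(x)=\lfloor\rho(x)\rfloor_M$, and $\lfloor\_\rfloor_M=\_$), with $\lfloor(\mathfrak m:e)\rfloor_M=(\mathfrak m:\lfloor e\rfloor_M)$ if $\mathfrak m\in M$ and $\lfloor(\mathfrak m:e)\rfloor_M=\_$ if $\mathfrak m\notin M$. *)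

From Stdlib Require Import String List QArith.
Import ListNotations.
Set Implicit Arguments.

Definition name := string.
Definition marker := string.

Inductive const : Type :=
| CUndef | CNull | CTrue | CFalse
| CStr (s : string)
| CNum (q : Q).

(* Expressions. Environments are finite partial maps Name -> value,
   represented as association lists (first binding wins). *)
Inductive expr : Type :=
| EConst (k : const)
| ERec (fs : list (string * expr))
| EVar (x : name)
| EFun (x : name) (e : expr)
| EApp (e1 e2 : expr)
| EBox (e : expr)
| EUnbox (e : expr)
| ERun (e : expr)
| EIf (e1 e2 e3 : expr)
| ERead (e1 e2 : expr)
| EWrite (e1 e2 e3 : expr)
| EDel (e1 e2 : expr)
| EClo (e : expr) (rho : list (name * expr))
| ERunIn (e : expr) (rho : list (name * expr))
| EMark (m : marker) (e : expr)
| EHole.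

Definition env := list (name * expr).

Fixpoint lookup (rho : env) (x : name) : option expr :=
  match rho with
  | [] => None
  | (y, v) :: t => if String.eqb x y then Some v else lookup t x
  end.

Definition update (rho : env) (x : name) (v : expr) : env := (x, v) :: rho.

Definition pi : string := "__proto__"%string.

Definition sel (s : string) : expr := EConst (CStr s).

Inductive val : nat -> expr -> Prop :=
| VClo x e rho : val 0 (EClo (EFun x e) rho)
| VConst n k : val n (EConst k)
| VRec n fs : Forall (fun p => val n (snd p)) fs -> val n (ERec fs)
| VBox n v : val (S n) v -> val n (EBox v)
| VMark n m v : val n v -> val n (EMark m v)
| VHole n : val n EHole
| VVar n x : val (S n) (EVar x)
| VFun n x v : val (S n) v -> val (S n) (EFun x v)
| VApp n v1 v2 : val (S n) v1 -> val (S n) v2 -> val (S n) (EApp v1 v2)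
| VRun n v : val (S n) v -> val (S n) (ERun v)
| VIf n v1 v2 v3 : val (S n) v1 -> val (S n) v2 -> val (S n) v3 ->
    val (S n) (EIf v1 v2 v3)
| VRead n v1 v2 : val (S n) v1 -> val (S n) v2 -> val (S n) (ERead v1 v2)
| VWrite n v1 v2 v3 : val (S n) v1 -> val (S n) v2 -> val (S n) v3 ->
    val (S n) (EWrite v1 v2 v3)
| VDel n v1 v2 : val (S n) v1 -> val (S n) v2 -> val (S n) (EDel v1 v2)
| VUnbox n v : val (S n) v -> val (S (S n)) (EUnbox v).

Inductive wf : expr -> Prop :=
| WConst k : wf (EConst k)
| WRec fs : NoDup (map fst fs) -> Forall (fun p => wf (snd p)) fs -> wf (ERec fs)
| WVar x : wf (EVar x)
| WFun x e : wf e -> wf (EFun x e)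
| WApp e1 e2 : wf e1 -> wf e2 -> wf (EApp e1 e2)
| WBox e : wf e -> wf (EBox e)
| WUnbox e : wf e -> wf (EUnbox e)
| WRun e : wf e -> wf (ERun e)
| WIf e1 e2 e3 : wf e1 -> wf e2 -> wf e3 -> wf (EIf e1 e2 e3)
| WRead e1 e2 : wf e1 -> wf e2 -> wf (ERead e1 e2)
| WWrite e1 e2 e3 : wf e1 -> wf e2 -> wf e3 -> wf (EWrite e1 e2 e3)
| WDel e1 e2 : wf e1 -> wf e2 -> wf (EDel e1 e2)
| WClo e rho : wf e -> NoDup (map fst rho) ->
    Forall (fun p => val 0 (snd p) /\ wf (snd p)) rho -> wf (EClo e rho)
| WRunIn e rho : wf e -> NoDup (map fst rho) ->
    Forall (fun p => val 0 (snd p) /\ wf (snd p)) rho -> wf (ERunIn e rho)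
| WMark m e : wf e -> wf (EMark m e)
| WHole : wf EHole.

Inductive lift_rule : Type :=
| LiftApp | LiftIf | LiftUnbox | LiftRunIn | LiftReadSel | LiftReadRec
| LiftWriteSel | LiftWriteRec | LiftDelSel | LiftDelRec.

Inductive rule : Type :=
| REnv                        (* any environment-propagation rule *)
| RLookup | RApply | RUnbox | RRun | RIfTrue | RIfFalse
| RRead1 | RRead2 | RRead3 | RWrite1 | RWrite2 | RDel1 | RDel2
| RLift (l : lift_rule) (m : marker).

Definition clo_fields (fs : list (string * expr)) (rho : env) :=
  map (fun p => (fst p, EClo (snd p) rho)) fs.

Inductive step : rule -> nat -> expr -> expr -> Prop :=
| SEConst n k rho : step REnv n (EClo (EConst k) rho) (EConst k)
| SERec n fs rho : step REnv n (EClo (ERec fs) rho) (ERec (clo_fields fs rho))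
| SEVar n x rho : step REnv (S n) (EClo (EVar x) rho) (EVar x)
| SEFun n x e rho : step REnv (S n) (EClo (EFun x e) rho) (EFun x (EClo e rho))
| SEApp n e1 e2 rho :
    step REnv n (EClo (EApp e1 e2) rho) (EApp (EClo e1 rho) (EClo e2 rho))
| SEBox n e rho : step REnv n (EClo (EBox e) rho) (EBox (EClo e rho))
| SEUnbox n e rho : step REnv n (EClo (EUnbox e) rho) (EUnbox (EClo e rho))
| SERun0 e rho : step REnv 0 (EClo (ERun e) rho) (ERunIn (EClo e rho) rho)
| SERunS n e rho : step REnv (S n) (EClo (ERun e) rho) (ERun (EClo e rho))
| SEIf n e1 e2 e3 rho :
    step REnv n (EClo (EIf e1 e2 e3) rho)
      (EIf (EClo e1 rho) (EClo e2 rho) (EClo e3 rho))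
| SERead n e1 e2 rho :
    step REnv n (EClo (ERead e1 e2) rho) (ERead (EClo e1 rho) (EClo e2 rho))
| SEWrite n e1 e2 e3 rho :
    step REnv n (EClo (EWrite e1 e2 e3) rho)
      (EWrite (EClo e1 rho) (EClo e2 rho) (EClo e3 rho))
| SEDel n e1 e2 rho :
    step REnv n (EClo (EDel e1 e2) rho) (EDel (EClo e1 rho) (EClo e2 rho))
| SEMark n m e rho : step REnv n (EClo (EMark m e) rho) (EMark m (EClo e rho))
| SEHole n rho : step REnv n (EClo EHole rho) EHole
| SLookup x rho v : lookup rho x = Some v -> step RLookup 0 (EClo (EVar x) rho) v
| SApply x e rho v : val 0 v ->
    step RApply 0 (EApp (EClo (EFun x e) rho) v) (EClo e (update rho x v))
| SUnbox v : val 1 v -> step RUnbox 1 (EUnbox (EBox v)) v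
| SRun v rho : val 1 v -> step RRun 0 (ERunIn (EBox v) rho) (EClo v rho)
| SIfTrue e1 e2 : step RIfTrue 0 (EIf (EConst CTrue) e1 e2) e1
| SIfFalse e1 e2 : step RIfFalse 0 (EIf (EConst CFalse) e1 e2) e2
| SRead1 fs1 s v fs2 : val 0 (ERec (fs1 ++ (s, v) :: fs2)) ->
    step RRead1 0 (ERead (ERec (fs1 ++ (s, v) :: fs2)) (sel s)) v
| SRead2 fs1 fs' fs2 sx : val 0 (ERec (fs1 ++ (pi, ERec fs') :: fs2)) ->
    ~ In sx (map fst fs1 ++ map fst fs2) ->
    step RRead2 0 (ERead (ERec (fs1 ++ (pi, ERec fs') :: fs2)) (sel sx))
      (ERead (ERec fs') (sel sx))
| SRead3 fs1 fs2 sx : val 0 (ERec (fs1 ++ (pi, EConst CNull) :: fs2)) ->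
    ~ In sx (map fst fs1 ++ map fst fs2) ->
    step RRead3 0 (ERead (ERec (fs1 ++ (pi, EConst CNull) :: fs2)) (sel sx))
      (EConst CUndef)
| SWrite1 fs1 s v fs2 v' : val 0 (ERec (fs1 ++ (s, v) :: fs2)) -> val 0 v' ->
    step RWrite1 0 (EWrite (ERec (fs1 ++ (s, v) :: fs2)) (sel s) v')
      (ERec (fs1 ++ (s, v') :: fs2))
| SWrite2 fs sx vx : val 0 (ERec fs) -> val 0 vx -> ~ In sx (map fst fs) ->
    step RWrite2 0 (EWrite (ERec fs) (sel sx) vx) (ERec (fs ++ [(sx, vx)]))
| SDel1 fs1 s v fs2 : val 0 (ERec (fs1 ++ (s, v) :: fs2)) ->
    step RDel1 0 (EDel (ERec (fs1 ++ (s, v) :: fs2)) (sel s)) (ERec (fs1 ++ fs2))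
| SDel2 fs sx : val 0 (ERec fs) -> ~ In sx (map fst fs) ->
    step RDel2 0 (EDel (ERec fs) (sel sx)) (ERec fs)
| SLiftApp m e rho v : val 0 v ->
    step (RLift LiftApp m) 0 (EApp (EClo (EMark m e) rho) v)
      (EMark m (EApp (EClo e rho) v))
| SLiftIf m v e1 e2 : val 0 v ->
    step (RLift LiftIf m) 0 (EIf (EMark m v) e1 e2) (EMark m (EIf v e1 e2))
| SLiftUnbox m v : val 0 v ->
    step (RLift LiftUnbox m) 1 (EUnbox (EMark m v)) (EMark m (EUnbox v))
| SLiftRunIn m v rho : val 0 v ->
    step (RLift LiftRunIn m) 0 (ERunIn (EMark m v) rho) (EMark m (ERunIn v rho))
| SLiftReadSel m v1 v2 : val 0 v1 -> val 0 v2 ->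
    step (RLift LiftReadSel m) 0 (ERead v1 (EMark m v2)) (EMark m (ERead v1 v2))
| SLiftReadRec m v1 v2 : val 0 v1 -> val 0 v2 ->
    step (RLift LiftReadRec m) 0 (ERead (EMark m v1) v2) (EMark m (ERead v1 v2))
| SLiftWriteSel m v1 v2 v3 : val 0 v1 -> val 0 v2 -> val 0 v3 ->
    step (RLift LiftWriteSel m) 0 (EWrite v1 (EMark m v2) v3)
      (EMark m (EWrite v1 v2 v3))
| SLiftWriteRec m v1 v2 v3 : val 0 v1 -> val 0 v2 -> val 0 v3 ->
    step (RLift LiftWriteRec m) 0 (EWrite (EMark m v1) v2 v3)
      (EMark m (EWrite v1 v2 v3))
| SLiftDelSel m v1 v2 : val 0 v1 -> val 0 v2 ->
    step (RLift LiftDelSel m) 0 (EDel v1 (EMark m v2)) (EMark m (EDel v1 v2))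
| SLiftDelRec m v1 v2 : val 0 v1 -> val 0 v2 ->
    step (RLift LiftDelRec m) 0 (EDel (EMark m v1) v2) (EMark m (EDel v1 v2)).

Definition reduces (n : nat) (e1 e2 : expr) : Prop := exists r, step r n e1 e2.

Fixpoint erase (M : marker -> bool) (e : expr) : expr :=
  let fix erase_list (l : list (string * expr)) : list (string * expr) :=
    match l with
    | [] => []
    | (s, e') :: t => (s, erase M e') :: erase_list t
    end in
  match e with
  | EConst k => EConst k
  | ERec fs => ERec (erase_list fs)
  | EVar x => EVar x
  | EFun x e1 => EFun x (erase M e1)
  | EApp e1 e2 => EApp (erase M e1) (erase M e2)
  | EBox e1 => EBox (erase M e1)
  | EUnbox e1 => EUnbox (erase M e1)
  | ERun e1 => ERun (erase M e1)
  | EIf e1 e2 e3 => EIf (erase M e1) (erase M e2) (erase M e3)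
  | ERead e1 e2 => ERead (erase M e1) (erase M e2)
  | EWrite e1 e2 e3 => EWrite (erase M e1) (erase M e2) (erase M e3)
  | EDel e1 e2 => EDel (erase M e1) (erase M e2)
  | EClo e1 rho => EClo (erase M e1) (erase_list rho)
  | ERunIn e1 rho => ERunIn (erase M e1) (erase_list rho)
  | EMark m e1 => if M m then EMark m (erase M e1) else EHole
  | EHole => EHole
  end.

(* Erasure commutes with every rule of top-level reduction: each rule is a
   pattern over constructors that erasure maps homomorphically, and the value
   side conditions survive because the erasure of a value of stage n is again a
   value of stage n (a marked value becomes a hole, itself a value).  The one
   place where the pattern breaks is a lift rule whose marker is erased: its
   redex loses the marker it inspects. *)
From Stdlib Require Import String List.
Import ListNotations.

Fixpoint erase_fields (M : marker -> bool) (fs : list (string * expr)) :=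
  match fs with
  | [] => []
  | (s, e) :: fs => (s, erase M e) :: erase_fields M fs
  end.

Lemma erase_fields_fix M fs :
  (fix erase_list (l : list (string * expr)) : list (string * expr) :=
     match l with
     | [] => []
     | (s, e) :: t => (s, erase M e) :: erase_list t
     end) fs = erase_fields M fs.
Proof. induction fs as [|[s e] fs IH]; simpl; [|rewrite IH]; reflexivity. Qed.

Lemma erase_rec M fs : erase M (ERec fs) = ERec (erase_fields M fs).
Proof. simpl. rewrite erase_fields_fix. reflexivity. Qed.

Lemma erase_clo M e rho : erase M (EClo e rho) = EClo (erase M e) (erase_fields M rho).
Proof. simpl. rewrite erase_fields_fix. reflexivity. Qed.

Lemma erase_runin M e rho :
  erase M (ERunIn e rho) = ERunIn (erase M e) (erase_fields M rho).
Proof. simpl. rewrite erase_fields_fix. reflexivity. Qed.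

Lemma erase_fields_app M fs1 fs2 :
  erase_fields M (fs1 ++ fs2) = erase_fields M fs1 ++ erase_fields M fs2.
Proof. induction fs1 as [|[s e] fs1 IH]; simpl; [|rewrite IH]; reflexivity. Qed.

Lemma map_fst_erase_fields M fs : map fst (erase_fields M fs) = map fst fs.
Proof. induction fs as [|[s e] fs IH]; simpl; [|rewrite IH]; reflexivity. Qed.

Lemma lookup_erase_fields M rho x :
  lookup (erase_fields M rho) x = option_map (erase M) (lookup rho x).
Proof.
  induction rho as [|[y v] rho IH]; [reflexivity|].
  simpl. destruct (String.eqb x y); auto.
Qed.

Lemma erase_fields_clo_fields M fs rho :
  erase_fields M (clo_fields fs rho) = clo_fields (erase_fields M fs) (erase_fields M rho).
Proof.
  unfold clo_fields.
  induction fs as [|[s e] fs IH]; cbn [map erase_fields fst snd]; [reflexivity|].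
  rewrite erase_clo, IH. reflexivity.
Qed.

(* A structural fixpoint, because [val] nests its recursion under [Forall]. *)
Fixpoint val_erase M n v (H : val n v) {struct H} : val n (erase M v).
Proof.
  destruct H as [| | n fs Hfs | | n m v Hv | | | | | | | | | |];
    try (constructor; apply val_erase; assumption).
  - rewrite erase_rec. constructor.
    induction Hfs as [|[s e] fs He _ IH]; constructor; [exact (val_erase M n e He) | exact IH].
  - simpl. destruct (M m); constructor. apply val_erase. assumption.
Qed.

Ltac push_erase :=
  repeat progress
    (rewrite ?erase_rec, ?erase_clo, ?erase_runin, ?erase_fields_app in *;
     cbn [erase erase_fields] in *; rewrite ?erase_fields_fix in *).

Ltac erase_val_hyps M :=
  repeat match goal with
         | H : val _ ?v |- _ =>
             lazymatch v with erase _ _ => fail | _ => apply (val_erase M) in H end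
         end.

Lemma step_erase M r n e1 e2 :
  step r n e1 e2 ->
  (forall l m, r = RLift l m -> M m = true) ->
  step r n (erase M e1) (erase M e2).
Proof.
  intros Hstep Hkept.
  destruct Hstep; erase_val_hyps M; push_erase.
  all: try rewrite (Hkept _ _ eq_refl).
  all: try (econstructor; try eassumption; rewrite ?map_fst_erase_fields; assumption).
  - rewrite erase_fields_clo_fields. constructor.
  - (* an erased marker turns the [SEMark] step into an [SEHole] step *)
    destruct (M m); constructor.
  - constructor. rewrite lookup_erase_fields, H. reflexivity.
Qed.

Theorem lemma1 (M : marker -> bool) (n : nat) (e1 e2 : expr) (r : rule) :
  wf e1 -> step r n e1 e2 ->
  reduces n (erase M e1) (erase M e2) \/
  (exists (l : lift_rule) (m : marker), r = RLift l m /\ M m = false).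
Proof.
  intros _ Hstep.
  assert (Hr : (exists l m, r = RLift l m /\ M m = false) \/
               (forall l m, r = RLift l m -> M m = true)).
  { destruct r as [| | | | | | | | | | | | | | l m]; try (right; discriminate).
    destruct (M m) eqn:Hm; [right; congruence | left; eauto]. }
  destruct Hr as [Herased | Hkept]; [right; exact Herased |].
  left. exists r. apply step_erase; assumption.
Qed.
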